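(* $\beta(3,13,4) = 7$.
   Context: For integers $v \ge k \ge 2$, a $(v,k)$-packing is a pair $(X,\mathcal{B})$ where $X$ is a set of $v$ points and $\mathcal{B}$ is a set of $k$-subsets of $X$ (blocks) such that every pair of distinct points lies in at most one block. A partial parallel class (PPC) is a set of pairwise disjoint blocks; its size is the number of blocks. A PPC of size $\rho$ is maximum if the packing has no PPC of size $\rho+1$. $\beta(\rho,v,k)$ denotes the maximum number of blocks in a $(v,k)$-packing in which the maximum PPC has size $\rho$. *)

From mathcomp Require Import all_boot.
Set Implicit Arguments. Unset Strict Implicit. Unset Printing Implicit Defensive.

Definition is_packing (v k : nat) (B : {set {set 'I_v}}) : bool :=
  [forall b in B, #|b| == k] &&
  [forall x : 'I_v, forall y : 'I_v,
     (x != y) ==> (#|[set b in B | (x \in b) && (y \in b)]| <= 1)].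

Definition is_ppc (v : nat) (B P : {set {set 'I_v}}) : bool :=
  (P \subset B) &&
  [forall b1 in P, forall b2 in P, (b1 != b2) ==> [disjoint b1 & b2]].

Definition max_ppc_size (v : nat) (B : {set {set 'I_v}}) (rho : nat) : bool :=
  [exists P : {set {set 'I_v}}, is_ppc B P && (#|P| == rho)] &&
  ~~ [exists P : {set {set 'I_v}}, is_ppc B P && (#|P| == rho.+1)].

Definition beta (rho v k : nat) : nat :=
  \max_(B : {set {set 'I_v}} | is_packing k B && max_ppc_size B rho) #|B|.

(* A partial parallel class P of three 4-blocks covers 12 of the 13 points.
   Every other block meets each block of P in at most one point, hence has a
   point outside cover P: the one uncovered point z.  Blocks through z pairwise
   meet only in z, so removing z leaves disjoint 3-subsets of 12 points; there
   are at most 4 of them, and at most 7 blocks in all.  Conversely, the rows and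
   the columns through a point at infinity of a 3 x 4 grid give 7 blocks, and no
   4 disjoint blocks fit into 13 points. *)

From mathcomp Require Import all_boot zify.

Set Implicit Arguments. Unset Strict Implicit. Unset Printing Implicit Defensive.

Lemma card_cover_uniform (T : finType) (F : {set {set T}}) n :
  trivIset F -> {in F, forall A : {set T}, #|A| = n} -> #|cover F| = #|F| * n.
Proof.
by move=> /eqP <- cardF; rewrite (eq_bigr (fun _ => n)) ?sum_nat_const.
Qed.

Lemma is_packingP v k (B : {set {set 'I_v}}) :
  reflect ({in B, forall b : {set 'I_v}, #|b| = k} /\
           {in B &, forall b1 b2 : {set 'I_v}, b1 != b2 -> #|b1 :&: b2| <= 1})
          (is_packing k B).
Proof.
apply: (iffP andP) => [[/forall_inP cardB /forallP pairB] | [cardB pairB]]; split.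
- by move=> b /cardB /eqP.
- move=> b1 b2 h1 h2 ne; apply/card_le1_eqP => x y /setIP[x1 x2] /setIP[y1 y2].
  apply: contraTeq ne => xy; rewrite negbK; apply/eqP.
  have /implyP/(_ xy)/card_le1_eqP := forallP (pairB y) x.
  by apply; rewrite inE ?h1 ?h2 ?x1 ?x2 ?y1 ?y2.
- by apply/forall_inP => b /cardB ->.
- apply/forallP => x; apply/forallP => y; apply/implyP => xy.
  apply/card_le1_eqP => b1 b2; rewrite !inE => /and3P[h1 x1 y1] /and3P[h2 x2 y2].
  apply: contraTeq xy => ne; rewrite negbK; apply/eqP.
  by apply: (card_le1_eqP (pairB b2 b1 h2 h1 ne)); apply/setIP.
Qed.

Lemma is_ppcE v (B P : {set {set 'I_v}}) :
  is_ppc B P = (P \subset B) && trivIset P.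
Proof.
congr andb; apply/forall_inP/trivIsetP => [dP b1 b2 h1 h2 | dP b1 h1].
  by apply/implyP; apply/(forall_inP (dP b1 h1)).
by apply/forall_inP => b2 h2; apply/implyP/dP.
Qed.

Section Packing.

Variables (v k : nat) (B : {set {set 'I_v}}).
Hypothesis packB : is_packing k B.

Lemma card_packing_block b : b \in B -> #|b| = k.
Proof. by case/is_packingP: packB => cardB _ /cardB. Qed.

Lemma packing_meet_eq b1 b2 x y :
  b1 \in B -> b2 \in B -> b1 != b2 ->
  x \in b1 -> x \in b2 -> y \in b1 -> y \in b2 -> x = y.
Proof.
case/is_packingP: packB => _ pairB h1 h2 ne x1 x2 y1 y2.
by apply: (card_le1_eqP (pairB b1 b2 h1 h2 ne)); apply/setIP.
Qed.

Lemma card_cover_ppc P : is_ppc B P -> #|cover P| = #|P| * k.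
Proof.
rewrite is_ppcE => /andP[/subsetP sPB trivP].
by apply: card_cover_uniform trivP _ => b /sPB /card_packing_block.
Qed.

Lemma ppc_card_le P : is_ppc B P -> #|P| * k <= v.
Proof. by move/card_cover_ppc <-; rewrite -[leqRHS]card_ord max_card. Qed.

Lemma max_ppc_size_cover P :
  is_ppc B P -> v < #|P|.+1 * k -> max_ppc_size B #|P|.
Proof.
move=> ppcP v_lt; apply/andP; split.
  by apply/existsP; exists P; rewrite ppcP eqxx.
apply/existsP => -[Q /andP[ppcQ /eqP cardQ]].
by have := ppc_card_le ppcQ; rewrite cardQ leqNgt v_lt.
Qed.

(* [pblock P] is injective on [b :&: cover P]: two points of [b] in one block
   of [P] would lie in two distinct blocks. *)
Lemma card_block_meet_cover (P : {set {set 'I_v}}) b :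
  P \subset B -> b \in B -> b \notin P -> #|b :&: cover P| <= #|P|.
Proof.
move=> /subsetP sPB bB bNP.
have inj : {in b :&: cover P &, injective (pblock P)}.
  move=> x y /setIP[xb xP] /setIP[yb yP] eqxy.
  have AP := pblock_mem xP; have yA : y \in pblock P x by rewrite eqxy mem_pblock.
  apply: (packing_meet_eq bB (sPB _ AP)) => //; last by rewrite mem_pblock.
  by apply: contraNneq bNP => ->.
rewrite -(card_in_imset inj); apply/subset_leq_card/subsetP => A.
by case/imsetP=> x /setIP[_ /pblock_mem AP] ->.
Qed.

Lemma card_blocks_through z : #|[set b in B | z \in b]| * k.-1 <= v.-1.
Proof.
set Bz := [set b in B | z \in b].
have BzP b : b \in Bz -> (b \in B) * (z \in b) by rewrite inE => /andP[].
have inj : {in Bz &, injective (fun b => b :\ z)}.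
  by move=> b1 b2 /BzP[_ z1] /BzP[_ z2] eqb; rewrite -(setD1K z1) eqb setD1K.
rewrite -(card_in_imset inj) -(card_cover_uniform (n := k.-1)).
- rewrite -[v in v.-1]card_ord -(cardsC1 z); apply/subset_leq_card/subsetP => x.
  by case/bigcupP=> _ /imsetP[b _ ->]; rewrite !inE => /andP[].
- apply/trivIsetP => _ _ /imsetP[b1 h1 ->] /imsetP[b2 h2 ->] ne.
  have {}ne : b1 != b2 by apply: contraNneq ne => ->.
  move: h1 h2 => /BzP[h1 z1] /BzP[h2 z2].
  apply/pred0P => x /=; apply/negbTE/andP => -[/setD1P[xz x1] /setD1P[_ x2]].
  by move/eqP: xz; apply; apply: (packing_meet_eq h1 h2 ne).
- move=> _ /imsetP[b /BzP[bB zb] ->].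
  by rewrite -(card_packing_block bB) (cardsD1 z b) zb.
Qed.

Lemma card_packing_le_ppc P :
  is_ppc B P -> #|P| < k -> v = (#|P| * k).+1 -> (#|B| - #|P|) * k.-1 <= v.-1.
Proof.
move=> ppcP ltPk v_eq; have sPB : P \subset B by case/andP: ppcP.
have [z coverPC] : exists z, ~: cover P = [set z].
  apply/cards1P/eqP/(@addnI (#|P| * k)).
  by rewrite addn1 -v_eq -(card_cover_ppc ppcP) cardsC card_ord.
have through_z : B :\: P \subset [set b in B | z \in b].
  apply/subsetP => b /setDP[bB bNP]; rewrite inE bB /=.
  have : ~~ (b \subset cover P).
    apply: contraTN ltPk => /setIidPl bPb.
    rewrite -leqNgt -(card_packing_block bB) -bPb.
    exact: card_block_meet_cover sPB bB bNP.
  case/subsetPn => x xb; rewrite -in_setC coverPC.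
  by move/set1P <-.
rewrite -(setIidPr sPB) -cardsD.
by apply: leq_trans (card_blocks_through z); rewrite leq_mul2r subset_leq_card ?orbT.
Qed.

End Packing.

Lemma card_set_ord v (p : pred nat) : #|[set x : 'I_v | p x]| = count p (iota 0 v).
Proof.
rewrite cardsE cardE /enum_mem size_filter -enumT -val_enum_ord count_map.
exact: eq_count.
Qed.

Definition set13 (l : seq nat) : {set 'I_13} := [set x : 'I_13 | val x \in l].

Lemma card_set13I l1 l2 :
  #|set13 l1 :&: set13 l2| = count [predI mem l1 & mem l2] (iota 0 13).
Proof. by rewrite -card_set_ord; apply: eq_card => x; rewrite !inE. Qed.

(* The 3 x 4 grid on the points 0..11, read row by row, plus a point 12 at
   infinity: its rows, and its columns extended by 12. *)
Definition grid_rows : seq (seq nat) :=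
  [:: [:: 0; 1; 2; 3]; [:: 4; 5; 6; 7]; [:: 8; 9; 10; 11]].
Definition grid_lines : seq (seq nat) := grid_rows ++
  [:: [:: 0; 4; 8; 12]; [:: 1; 5; 9; 12]; [:: 2; 6; 10; 12]; [:: 3; 7; 11; 12]].

Lemma card_grid_line : {in grid_lines, forall l, #|set13 l| = 4}.
Proof.
move=> l l_in; rewrite -(setIid (set13 l)) card_set13I; apply/eqP.
by move: l l_in; apply/allP.
Qed.

Lemma card_grid_lines_meet :
  {in grid_lines &, forall l1 l2, l1 != l2 -> #|set13 l1 :&: set13 l2| <= 1}.
Proof.
move=> l1 l2 h1 h2; rewrite card_set13I; apply/implyP.
by move: l1 l2 h1 h2; apply/allrelP.
Qed.

Lemma grid_rows_disjoint :
  {in grid_rows &, forall l1 l2, l1 != l2 -> [disjoint set13 l1 & set13 l2]}.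
Proof.
move=> l1 l2 h1 h2; rewrite -setI_eq0 -cards_eq0 card_set13I; apply/implyP.
by move: l1 l2 h1 h2; apply/allrelP.
Qed.

Lemma set13_grid_inj : {in grid_lines &, injective set13}.
Proof.
move=> l1 l2 h1 h2 eq12; apply/eqP/contraT => /(card_grid_lines_meet h1 h2).
by rewrite eq12 setIid card_grid_line.
Qed.

Definition grid_packing : {set {set 'I_13}} := [set b in map set13 grid_lines].
Definition grid_ppc : {set {set 'I_13}} := [set b in map set13 grid_rows].

Lemma card_grid_blocks s :
  {subset s <= grid_lines} -> uniq s -> #|[set b in map set13 s]| = size s.
Proof.
move=> sub uniq_s; rewrite cardsE -(size_map set13); apply/card_uniqP.
by rewrite (map_inj_in_uniq (sub_in2 sub set13_grid_inj)).
Qed.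

Lemma grid_packing_is_packing : is_packing 4 grid_packing.
Proof.
rewrite /grid_packing; apply/is_packingP; split => [b | b1 b2]; rewrite !in_set.
  by case/mapP=> l l_in ->; apply: card_grid_line.
move=> /mapP[l1 h1 ->] /mapP[l2 h2 ->] ne; apply: card_grid_lines_meet => //.
by apply: contraNneq ne => ->.
Qed.

Lemma grid_ppc_is_ppc : is_ppc grid_packing grid_ppc.
Proof.
rewrite /grid_packing /grid_ppc is_ppcE; apply/andP; split.
  apply/subsetP => b; rewrite !in_set => /mapP[l l_in ->].
  by apply: map_f; rewrite mem_cat l_in.
apply/trivIsetP => b1 b2; rewrite !in_set => /mapP[l1 h1 ->] /mapP[l2 h2 ->] ne.
by apply: grid_rows_disjoint => //; apply: contraNneq ne => ->.
Qed.

Theorem theorem4p8 : beta 3 13 4 = 7.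
Proof.
apply/eqP; rewrite eqn_leq; apply/andP; split.
  apply/bigmax_leqP => B /andP[packB /andP[/existsP[P /andP[ppcP /eqP cardP]] _]].
  have := card_packing_le_ppc packB ppcP; rewrite cardP => /(_ isT erefl).
  by lia.
have card_grid_ppc : #|grid_ppc| = 3.
  by apply: card_grid_blocks => // l l_in; rewrite mem_cat l_in.
have card_grid_packing : #|grid_packing| = 7 by apply: card_grid_blocks.
have max_grid : max_ppc_size grid_packing 3.
  have := max_ppc_size_cover grid_packing_is_packing grid_ppc_is_ppc.
  by rewrite card_grid_ppc; apply.
rewrite -{1}card_grid_packing; apply: leq_bigmax_cond.
by rewrite grid_packing_is_packing max_grid.
Qed.
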